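(* Let $B_1$ and $B_2$ be finite Blaschke products of degrees $M$ and $N$ respectively, and let $0<r<1$. If $|B_1(z)|=|B_2(z)|$ for more than $2N+2M-1$ distinct points $z\in r\mathbb{T}$, then $B_2$ is a constant multiple of $B_1$.
   Context: $r\mathbb{T}=\{z\in\mathbb{C}:|z|=r\}$. A finite Blaschke product of degree $M$ is a function $c\prod_{j=1}^M\frac{z-\alpha_j}{1-\overline{\alpha_j}z}$ with $|c|=1$ and $\alpha_j$ in the open unit disc. *)

From HB Require Import structures.
From mathcomp Require Import all_boot all_order all_algebra.
From mathcomp Require Import complex.
Set Implicit Arguments. Unset Strict Implicit. Unset Printing Implicit Defensive.
Import Order.TTheory GRing.Theory Num.Theory.
Local Open Scope ring_scope.

Definition blaschke (R : rcfType) (c : R[i]) (s : seq R[i]) (z : R[i]) : R[i] :=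
  c * \prod_(a <- s) ((z - a) / (1 - Num.conj a * z)).

Definition is_blaschke (R : rcfType) (c : R[i]) (s : seq R[i]) : Prop :=
  `|c| = 1 /\ (forall a, a \in s -> `|a| < 1).

From HB Require Import structures.
From mathcomp Require Import all_boot all_order all_algebra.
From mathcomp Require Import complex.
From mathcomp Require Import ring zify.
Import Order.TTheory GRing.Theory Num.Theory.
Local Open Scope ring_scope.
Set Implicit Arguments. Unset Strict Implicit.

(* Write B_k = c_k P_k / Q_k with P_k = prod (z - a) and Q_k = prod (1 - conj(a) z),
   and put p = P_1 Q_2, q = P_2 Q_1, of degree at most M + N.  For rho = r^-2 the
   dilation z |-> rho z is, on the circle |z| = r, the reflection z |-> 1 / conj z,
   which exchanges P and conj Q up to the factor conj(z)^deg.  Hence with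
   (sigma f)(z) = f (rho z) the polynomial p sigma(q) - q sigma(p) equals
   (|p|^2 - |q|^2) / conj(z)^(M+N) on the circle; it vanishes wherever |B_1| = |B_2|
   and at 0, so it is identically zero by the degree bound 2(M+N).
   Once the gcd is divided out, p sigma(q) = q sigma(p) makes p and q eigenvectors
   of sigma with the same eigenvalue rho^deg; if that eigenvalue is not 1 then 0 is a
   common root, and since rho > 1 is not a root of unity both must be constants. *)

Lemma prodf_div_const (F : fieldType) (I : Type) (s : seq I) (f : I -> F) w :
  \prod_(i <- s) (f i / w) = (\prod_(i <- s) f i) / w ^+ size s.
Proof. by rewrite prodf_div big_const_seq count_predT iter_mulr_1. Qed.

Section Dilation.
Variables (F : fieldType) (rho : F).
Hypothesis rho_neq0 : rho != 0.
Implicit Types f g u v : {poly F}.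

Definition dilate (f : {poly F}) : {poly F} := f \Po (rho *: 'X).

Lemma dilateM f g : dilate (f * g) = dilate f * dilate g.
Proof. exact: comp_polyM. Qed.

Lemma horner_dilate f x : (dilate f).[x] = f.[rho * x].
Proof. by rewrite horner_comp hornerZ hornerX. Qed.

Lemma size_scaleX : size (rho *: 'X : {poly F}) = 2.
Proof. by rewrite size_scale // size_polyX. Qed.

Lemma size_dilate f : size (dilate f) = size f.
Proof. exact: size_comp_poly2 size_scaleX. Qed.

Lemma dilate_eq0 f : (dilate f == 0) = (f == 0).
Proof. by rewrite -!size_poly_eq0 size_dilate. Qed.

Lemma lead_coef_dilate f : lead_coef (dilate f) = lead_coef f * rho ^+ (size f).-1.
Proof. by rewrite lead_coef_comp ?size_scaleX // lead_coefZ lead_coefX mulr1. Qed.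

Lemma size_mul_dilateB n u v : (size u <= n.+1)%N -> (size v <= n.+1)%N ->
  (size (u * dilate v - v * dilate u)%R <= (2 * n).+1)%N.
Proof.
have size_mul (w1 w2 : {poly F}) : (size w1 <= n.+1)%N -> (size w2 <= n.+1)%N ->
    (size (w1 * dilate w2)%R <= (2 * n).+1)%N.
  move=> s1 s2; apply: leq_trans (size_polyMleq _ _) _; rewrite size_dilate; lia.
move=> su sv; apply: leq_trans (size_polyD _ _) _.
by rewrite geq_max size_polyN !size_mul.
Qed.

Lemma root_mul_dilateB0 u v : root (u * dilate v - v * dilate u) 0.
Proof. by rewrite rootE !hornerE !horner_dilate mulr0 mulrC subrr. Qed.

Lemma dilate_eigen_root0 u m :
  dilate u = rho ^+ m *: u -> rho ^+ m != 1 -> root u 0.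
Proof.
move=> eu rho_m; have := horner_dilate u 0; rewrite eu hornerZ mulr0 => u0.
have : (1 - rho ^+ m) * u.[0] == 0 by rewrite mulrBl mul1r u0 subrr.
by rewrite mulf_eq0 subr_eq0 eq_sym (negPf rho_m) rootE.
Qed.

(* [u] divides [v * dilate u], hence [dilate u], which has the same size. *)
Lemma dilate_coprime_eigen u v : coprimep u v -> u != 0 ->
  u * dilate v = v * dilate u -> dilate u = rho ^+ (size u).-1 *: u.
Proof.
move=> cop_uv u_neq0 e.
have u_dvd : u %| dilate u by rewrite -(Gauss_dvdpr _ cop_uv) -e dvdp_mulr.
have : u %= dilate u by rewrite -(dvdp_size_eqp u_dvd) size_dilate.
move/eqp_eq; rewrite lead_coef_dilate => e_lead.
have lu : lead_coef u != 0 by rewrite lead_coef_eq0.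
by apply: (@scalerI _ _ (lead_coef u)) => //; rewrite -e_lead scalerA mulrC.
Qed.

Hypothesis rho_not_unity : forall n, rho ^+ n.+1 != 1.

Lemma expr_rho_eq1 n : (rho ^+ n == 1) = (n == 0)%N.
Proof. by case: n => [|n]; rewrite ?expr0 ?eqxx // (negPf (rho_not_unity n)). Qed.

Lemma dilate_coprime_scale u v : coprimep u v -> u != 0 -> v != 0 ->
  u * dilate v = v * dilate u -> exists l, v = l *: u.
Proof.
move=> cop_uv u_neq0 v_neq0 e.
have eu := dilate_coprime_eigen cop_uv u_neq0 e.
have cop_vu : coprimep v u by rewrite coprimep_sym.
have ev := dilate_coprime_eigen cop_vu v_neq0 (esym e).
have e_rho : rho ^+ (size u).-1 = rho ^+ (size v).-1.
  have uv_neq0 : lead_coef (u * v) != 0 by rewrite lead_coef_eq0 mulf_neq0.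
  apply: (mulIf uv_neq0).
  by rewrite -!lead_coefZ scalerAl -eu scalerAr -ev e mulrC.
have k0 : (size u).-1 = 0%N.
  apply/eqP; rewrite -expr_rho_eq1; apply/negPn/negP => rho_k.
  have u0 := dilate_eigen_root0 eu rho_k.
  have v0 : root v 0 by apply: (dilate_eigen_root0 ev); rewrite -e_rho.
  by move: (coprimep_root cop_uv u0); rewrite (rootP v0) eqxx.
have l0 : (size v).-1 = 0%N by apply/eqP; rewrite -expr_rho_eq1 -e_rho k0.
have uv : u %= v.
  rewrite (@eqp_ltrans _ _ 1); last by rewrite -size_poly_eq1 (polySpred u_neq0) k0.
  by rewrite eqp_sym -size_poly_eq1 (polySpred v_neq0) l0.
exists (lead_coef v / lead_coef u).
by rewrite mulrC -scalerA (eqp_eq uv) scalerA mulVf ?scale1r ?lead_coef_eq0.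
Qed.

Lemma dilate_ratio_scale p q : p != 0 -> q != 0 ->
  p * dilate q = q * dilate p -> exists l, q = l *: p.
Proof.
move=> p_neq0 q_neq0 e.
have cop : coprimep (p %/ gcdp p q) (q %/ gcdp p q) by rewrite coprimep_div_gcd ?p_neq0.
have pg : p = p %/ gcdp p q * gcdp p q by rewrite divpK // dvdp_gcdl.
have qg : q = q %/ gcdp p q * gcdp p q by rewrite divpK // dvdp_gcdr.
move: cop pg qg e; set g := gcdp p q; set p' := p %/ g; set q' := q %/ g.
move=> cop pg qg e.
have g_neq0 : g != 0 by apply: contraNneq p_neq0 => g0; rewrite pg g0 mulr0.
have p'_neq0 : p' != 0 by apply: contraNneq p_neq0 => p'0; rewrite pg p'0 mul0r.
have q'_neq0 : q' != 0 by apply: contraNneq q_neq0 => q'0; rewrite qg q'0 mul0r.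
have e' : p' * dilate q' = q' * dilate p'.
  have gg_neq0 : g * dilate g != 0 by rewrite mulf_neq0 ?dilate_eq0.
  apply: (mulIf gg_neq0); transitivity (p * dilate q).
    by rewrite pg qg !dilateM; ring.
  by rewrite e pg qg !dilateM; ring.
have [l ql] := dilate_coprime_scale cop p'_neq0 q'_neq0 e'.
by exists l; rewrite qg ql -scalerAl -pg.
Qed.
End Dilation.

Section BlaschkeFactors.
Variable C : numClosedFieldType.
Implicit Types (s : seq C) (z rho : C).

Definition blaschke_num s : {poly C} := \prod_(a <- s) ('X - a%:P).
Definition blaschke_den s : {poly C} := \prod_(a <- s) (1 - a^* *: 'X).

Lemma horner_blaschke_num s z : (blaschke_num s).[z] = \prod_(a <- s) (z - a).
Proof. by rewrite horner_prod; apply: eq_bigr => a _; rewrite hornerXsubC. Qed.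

Lemma horner_blaschke_den s z : (blaschke_den s).[z] = \prod_(a <- s) (1 - a^* * z).
Proof. by rewrite horner_prod; apply: eq_bigr => a _; rewrite !hornerE. Qed.

Lemma size_blaschke_num s : size (blaschke_num s) = (size s).+1.
Proof. exact: size_prod_XsubC. Qed.

Lemma size_blaschke_den s : (size (blaschke_den s) <= (size s).+1)%N.
Proof.
elim: s => [|a s IH]; first by rewrite /blaschke_den big_nil size_poly1.
rewrite /blaschke_den big_cons -/(blaschke_den s).
have size_factor : (size (1 - a^* *: 'X : {poly C})%R <= 2)%N.
  apply: leq_trans (size_polyD _ _) _.
  by rewrite geq_max size_poly1 size_polyN (leq_trans (size_scale_leq _ _)) ?size_polyX.
apply: leq_trans (size_polyMleq _ _) _ => /=.
move: size_factor IH; move: (size (1 - a^* *: 'X : {poly C})%R) (size (blaschke_den s)) => m n; lia.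
Qed.

Lemma horner_blaschke_den0 s : (blaschke_den s).[0] = 1.
Proof. by rewrite horner_blaschke_den big1 // => a _; rewrite mulr0 subr0. Qed.

Lemma blaschke_den_neq0 s : blaschke_den s != 0.
Proof.
by apply: contraNneq (oner_neq0 C) => den0; rewrite -(horner_blaschke_den0 s) den0 horner0.
Qed.

Lemma horner_blaschke_den_neq0 s z :
  `|z| < 1 -> (forall a, a \in s -> `|a| < 1) -> (blaschke_den s).[z] != 0.
Proof.
move=> z_lt1 s_lt1; rewrite horner_blaschke_den prodf_seq_neq0.
apply/allP => a /s_lt1 a_lt1; rewrite subr_eq0; apply: contraTneq isT => az.
have : `|a^* * z| < 1 by rewrite normrM norm_conjC mulr_ilt1.
by rewrite -az normr1 ltxx.
Qed.

Lemma dilation_conj_neq0 rho z : rho * (z * z^*) = 1 -> z^* != 0.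
Proof. by move=> hz; apply/eqP => zc0; move/eqP: hz; rewrite zc0 !mulr0 eq_sym oner_eq0. Qed.

Lemma dilation_conjV rho z : rho * (z * z^*) = 1 -> rho * z = (z^*)^-1.
Proof.
move=> hz; apply: (mulIf (dilation_conj_neq0 hz)).
by rewrite mulVf ?(dilation_conj_neq0 hz) // -mulrA.
Qed.

Lemma horner_blaschke_num_reflect s rho z : rho * (z * z^*) = 1 ->
  (blaschke_num s).[rho * z] = (blaschke_den s).[z]^* / z^* ^+ size s.
Proof.
move=> hz; have := dilation_conj_neq0 hz.
rewrite (dilation_conjV hz) horner_blaschke_num horner_blaschke_den rmorph_prod.
rewrite -prodf_div_const => zc_neq0; apply: eq_bigr => a _.
by rewrite rmorphB rmorph1 rmorphM /= conjCK; field.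
Qed.

Lemma horner_blaschke_den_reflect s rho z : rho * (z * z^*) = 1 ->
  (blaschke_den s).[rho * z] = (blaschke_num s).[z]^* / z^* ^+ size s.
Proof.
move=> hz; have := dilation_conj_neq0 hz.
rewrite (dilation_conjV hz) horner_blaschke_num horner_blaschke_den rmorph_prod.
rewrite -prodf_div_const => zc_neq0; apply: eq_bigr => a _.
by rewrite rmorphB /=; field.
Qed.

Definition blaschke_cross s1 s2 : {poly C} := blaschke_num s1 * blaschke_den s2.

Lemma blaschke_cross_neq0 s1 s2 : blaschke_cross s1 s2 != 0.
Proof.
by rewrite mulf_neq0 ?blaschke_den_neq0 // -size_poly_eq0 size_blaschke_num.
Qed.

Lemma size_blaschke_cross s1 s2 :
  (size (blaschke_cross s1 s2) <= (size s1 + size s2).+1)%N.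
Proof.
apply: leq_trans (size_polyMleq _ _) _.
by rewrite size_blaschke_num addSn /= -addnS leq_add2l size_blaschke_den.
Qed.

Lemma horner_blaschke_cross_reflect s1 s2 rho z : rho * (z * z^*) = 1 ->
  (blaschke_cross s1 s2).[rho * z] =
    (blaschke_cross s2 s1).[z]^* / z^* ^+ (size s1 + size s2).
Proof.
move=> hz; rewrite !hornerM horner_blaschke_num_reflect // horner_blaschke_den_reflect //.
by rewrite rmorphM /= exprD invfM; ring.
Qed.

Lemma root_blaschke_cross_dilateB s1 s2 rho z : rho * (z * z^*) = 1 ->
  `|(blaschke_cross s1 s2).[z]| = `|(blaschke_cross s2 s1).[z]| ->
  root (blaschke_cross s1 s2 * dilate rho (blaschke_cross s2 s1)
        - blaschke_cross s2 s1 * dilate rho (blaschke_cross s1 s2)) z.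
Proof.
move=> hz norm_pq; rewrite rootE hornerD hornerN.
rewrite (hornerM (blaschke_cross s1 s2)) (hornerM (blaschke_cross s2 s1)).
rewrite !horner_dilate !horner_blaschke_cross_reflect // addnC !mulrA.
by rewrite -!normCK norm_pq subrr.
Qed.

End BlaschkeFactors.

Section BlaschkeProducts.
Variable R : rcfType.
Implicit Types (c : R[i]) (s : seq R[i]) (z : R[i]).

Lemma blaschkeE c s z :
  blaschke c s z = c * ((blaschke_num s).[z] / (blaschke_den s).[z]).
Proof. by rewrite /blaschke prodf_div horner_blaschke_num horner_blaschke_den. Qed.

Lemma norm_blaschke_cross c1 c2 s1 s2 z : `|c1| = 1 -> `|c2| = 1 ->
  (blaschke_den s1).[z] != 0 -> (blaschke_den s2).[z] != 0 ->
  `|blaschke c1 s1 z| = `|blaschke c2 s2 z| ->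
  `|(blaschke_cross s1 s2).[z]| = `|(blaschke_cross s2 s1).[z]|.
Proof.
move=> c1_unit c2_unit d1_neq0 d2_neq0.
rewrite !blaschkeE !normrM c1_unit c2_unit !mul1r !normfV => /eqP.
by rewrite eqr_div ?normr_eq0 // !hornerM !normrM => /eqP.
Qed.

Lemma blaschke_cross_scale c1 c2 s1 s2 l z : c1 != 0 ->
  (blaschke_den s1).[z] != 0 -> (blaschke_den s2).[z] != 0 ->
  blaschke_cross s2 s1 = l *: blaschke_cross s1 s2 ->
  blaschke c2 s2 z = c2 * l / c1 * blaschke c1 s1 z.
Proof.
move=> c1_neq0 d1_neq0 d2_neq0 /(congr1 (horner^~ z)).
rewrite hornerZ !hornerM !blaschkeE => e.
have -> : (blaschke_num s2).[z] / (blaschke_den s2).[z] =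
    l * ((blaschke_num s1).[z] / (blaschke_den s1).[z]).
  apply: (mulIf d1_neq0); apply: (mulIf d2_neq0).
  by rewrite mulrAC divfK // e -(mulrA l) divfK // mulrA.
by rewrite !mulrA divfK.
Qed.

Lemma blaschke_cross_dilate_eq c1 c2 s1 s2 rho (S : seq R[i]) :
  `|c1| = 1 -> `|c2| = 1 ->
  (forall a, a \in s1 -> `|a| < 1) -> (forall a, a \in s2 -> `|a| < 1) ->
  rho != 0 -> uniq S -> (2 * (size s1 + size s2) <= size S)%N ->
  (forall z, z \in S -> `|z| < 1) ->
  (forall z, z \in S -> rho * (z * z^*) = 1) ->
  (forall z, z \in S -> `|blaschke c1 s1 z| = `|blaschke c2 s2 z|) ->
  blaschke_cross s1 s2 * dilate rho (blaschke_cross s2 s1) =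
    blaschke_cross s2 s1 * dilate rho (blaschke_cross s1 s2).
Proof.
move=> c1_unit c2_unit s1_disc s2_disc rho_neq0 S_uniq S_size S_disc S_dilation S_norm.
apply/eqP; rewrite -subr_eq0; apply/eqP.
apply: (@roots_geq_poly_eq0 _ _ (0 :: S)) => /=.
- rewrite root_mul_dilateB0; apply/allP => z zS.
  apply: root_blaschke_cross_dilateB (S_dilation z zS) _.
  by apply: norm_blaschke_cross (S_norm z zS) => //; apply: horner_blaschke_den_neq0;
    rewrite ?S_disc.
- rewrite S_uniq andbT; apply/negP => /S_dilation.
  by rewrite mul0r mulr0 => /eqP; rewrite eq_sym oner_eq0.
- apply: leq_trans (size_mul_dilateB rho_neq0 (n := size s1 + size s2) _ _) _.
  + by rewrite size_blaschke_cross.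
  + by rewrite addnC size_blaschke_cross.
  + by rewrite ltnS.
Qed.

End BlaschkeProducts.

Theorem theorem2p11 (R : rcfType) (M N : nat)
    (c1 c2 : R[i]) (s1 s2 : seq R[i]) (r : R) :
  is_blaschke c1 s1 -> size s1 = M ->
  is_blaschke c2 s2 -> size s2 = N ->
  0 < r -> r < 1 ->
  (exists S : seq R[i],
      [/\ uniq S,
          (2 * N + 2 * M <= size S)%N (* i.e. size S > 2N + 2M - 1 *),
          (forall z, z \in S -> `|z| = (r%:C)%C) &
          (forall z, z \in S -> `|blaschke c1 s1 z| = `|blaschke c2 s2 z|)]) ->
  exists lambda : R[i], forall z : R[i], `|z| < 1 ->
    blaschke c2 s2 z = lambda * blaschke c1 s1 z.
Proof.
move=> [c1_unit s1_disc] s1M [c2_unit s2_disc] s2N r_gt0 r_lt1.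
move=> [S [S_uniq S_size S_circle S_norm]].
have rC_gt0 : (0 : R[i]) < (r%:C)%C by rewrite ltcR.
set rho := ((r%:C)%C ^+ 2)^-1.
have rho_gt1 : 1 < rho by rewrite invf_gt1 ?exprn_gt0 // expr_lt1 ?ltW // ltcR.
have rho_not_unity n : rho ^+ n.+1 != 1 by rewrite gt_eqF // exprn_egt1.
have rho_neq0 : rho != 0 by rewrite gt_eqF // (lt_trans ltr01).
have S_dilation z : z \in S -> rho * (z * z^*) = 1.
  by move=> zS; rewrite -normCK S_circle // mulVf // expf_neq0 // gt_eqF.
have S_disc z : z \in S -> `|z| < 1 by move=> zS; rewrite S_circle // ltcR.
have S_size' : (2 * (size s1 + size s2) <= size S)%N by rewrite s1M s2N; lia.
have pq := blaschke_cross_dilate_eq c1_unit c2_unit s1_disc s2_disc rho_neq0 S_uniq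
  S_size' S_disc S_dilation S_norm.
have c1_neq0 : c1 != 0 by rewrite -normr_eq0 c1_unit oner_eq0.
have [l ql] := dilate_ratio_scale rho_neq0 rho_not_unity (blaschke_cross_neq0 s1 s2)
  (blaschke_cross_neq0 s2 s1) pq.
exists (c2 * l / c1) => z z_disc.
by apply: blaschke_cross_scale; rewrite ?horner_blaschke_den_neq0.
Qed.
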